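(* Let $\mathbf{E},\mathbf{F}$ be finite-dimensional Euclidean spaces, $\mathcal{K}\subset\mathbf{E}$ a proper cone, $\mathcal{A}:\mathbf{E}\to\mathbf{F}$ linear, $b\in\mathbf{F}$, $c\in\mathbf{E}$, and consider the conic program $\min\{\langle c,x\rangle : \mathcal{A}x=b,\ x\in\mathcal{K}\}$ with solution set $\mathcal{X}_\star$ and its dual $\max\{\langle b,y\rangle : c-\mathcal{A}^*y\in\mathcal{K}^*\}$ with solution set $\mathcal{Y}_\star$. Suppose strong duality holds, and suppose dual strict complementarity holds for a primal–dual solution pair $(x_\star,y_\star)\in\mathcal{X}_\star\times\mathcal{Y}_\star$ with slack $s_\star=c-\mathcal{A}^*y_\star$, i.e. $x_\star\in\mathrm{relint}(\mathcal{F}_{s_\star})$. Then there are constants $\gamma,\gamma'\ge 0$ such that for every $x\in\mathcal{V}_{s_\star}$, $$\mathrm{dist}(x,\mathcal{X}_\star)\le \gamma\|\mathcal{A}(x)-b\|_2+\gamma'\,\mathrm{dist}(x,\mathcal{F}_{s_\star}).$$ Moreover, if $\mathcal{X}_\star$ is a singleton, then one may take $\gamma'=0$ and $\gamma=1/\sigma_{\min}(\mathcal{A}_{\mathcal{V}_{s_\star}})$, where $\mathcal{A}_{\mathcal{V}_{s_\star}}$ is the restriction of $\mathcal{A}$ to $\mathcal{V}_{s_\star}$ and $\sigma_{\min}(\mathcal{A}_{\mathcal{V}_{s_\star}})=\min_{x\in\mathcal{V}_{s_\star},\|x\|_2=1}\|\mathcal{A}x\|_2$.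
   Context: $\mathcal{K}^*=\{s\in\mathbf{E}:\langle s,x\rangle\ge0\ \forall x\in\mathcal{K}\}$ is the dual cone. Strong duality means: $\mathcal{X}_\star$ and $\mathcal{Y}_\star$ are nonempty, $\mathcal{X}_\star$ is compact, and there is a pair $(x_\star,y_\star)\in\mathcal{X}_\star\times\mathcal{Y}_\star$ with $\langle c,x_\star\rangle=\langle b,y_\star\rangle$, equivalently $\langle s_\star,x_\star\rangle=0$ where $s_\star=c-\mathcal{A}^*y_\star$. For a dual solution $y_\star$ with $s_\star=c-\mathcal{A}^*y_\star$, the complementary face is $\mathcal{F}_{s_\star}=\{x\in\mathcal{K}:\langle x,s_\star\rangle=0\}$ and the complementary space is $\mathcal{V}_{s_\star}=\mathrm{aff}(\mathcal{F}_{s_\star})$ (a linear subspace). $\mathrm{dist}(x,C)=\inf_{z\in C}\|x-z\|_2$; $\mathrm{relint}$ denotes relative interior. *)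

(* E = 'cV[R]_n, F = 'cV[R]_m (Euclidean spaces with the standard inner product),
   the linear map A : E -> F is represented by a matrix A : 'M[R]_(m, n),
   x |-> A *m x, whose adjoint is the transpose A^T. *)
From mathcomp Require Import all_boot all_order all_algebra.
From mathcomp Require Import all_classical all_reals all_analysis.
Import numFieldNormedType.Exports.
Import Order.TTheory GRing.Theory Num.Theory.
Set Implicit Arguments. Unset Strict Implicit. Unset Printing Implicit Defensive.
Local Open Scope classical_set_scope.
Local Open Scope ring_scope.

Section Defs.
Variable R : realType.

Definition dotv (n : nat) (u v : 'cV[R]_n) : R := \sum_(i < n) u i 0 * v i 0.

Definition enorm (n : nat) (u : 'cV[R]_n) : R := Num.sqrt (dotv u u).

Definition dist (n : nat) (x : 'cV[R]_n) (C : set 'cV[R]_n) : R :=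
  inf [set enorm (x - z) | z in C].

Definition is_cone (n : nat) (K : set 'cV[R]_n) : Prop :=
  K 0 /\ forall x t, K x -> 0 <= t -> K (t *: x).
Definition is_convex (n : nat) (K : set 'cV[R]_n) : Prop :=
  forall x y t, K x -> K y -> 0 <= t <= 1 -> K (t *: x + (1 - t) *: y).
Definition is_pointed (n : nat) (K : set 'cV[R]_n) : Prop :=
  forall x, K x -> K (- x) -> x = 0.
Definition proper_cone (n : nat) (K : set 'cV[R]_n) : Prop :=
  [/\ is_cone K, is_convex K, closed K, is_pointed K & interior K !=set0].

Definition dual_cone (n : nat) (K : set 'cV[R]_n) : set 'cV[R]_n :=
  [set s | forall x, K x -> 0 <= dotv s x].

Definition primal_feasible (m n : nat) (A : 'M[R]_(m, n)) (b : 'cV[R]_m)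
  (K : set 'cV[R]_n) : set 'cV[R]_n := [set x | A *m x = b /\ K x].
Definition primal_sol (m n : nat) (A : 'M[R]_(m, n)) (b : 'cV[R]_m)
  (c : 'cV[R]_n) (K : set 'cV[R]_n) : set 'cV[R]_n :=
  [set x | primal_feasible A b K x /\
           forall x', primal_feasible A b K x' -> dotv c x <= dotv c x'].

Definition dual_feasible (m n : nat) (A : 'M[R]_(m, n)) (c : 'cV[R]_n)
  (K : set 'cV[R]_n) : set 'cV[R]_m := [set y | dual_cone K (c - A^T *m y)].
Definition dual_sol (m n : nat) (A : 'M[R]_(m, n)) (b : 'cV[R]_m)
  (c : 'cV[R]_n) (K : set 'cV[R]_n) : set 'cV[R]_m :=
  [set y | dual_feasible A c K y /\
           forall y', dual_feasible A c K y' -> dotv b y' <= dotv b y].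

Definition strong_duality (m n : nat) (A : 'M[R]_(m, n)) (b : 'cV[R]_m)
  (c : 'cV[R]_n) (K : set 'cV[R]_n) : Prop :=
  [/\ primal_sol A b c K !=set0, dual_sol A b c K !=set0,
      compact (primal_sol A b c K) &
      exists x y, primal_sol A b c K x /\ dual_sol A b c K y /\
                  dotv c x = dotv b y].

Definition comp_face (n : nat) (K : set 'cV[R]_n) (s : 'cV[R]_n) : set 'cV[R]_n :=
  [set x | K x /\ dotv x s = 0].

Definition aff (n : nat) (C : set 'cV[R]_n) : set 'cV[R]_n :=
  [set x | exists (k : nat) (l : 'I_k -> R) (p : 'I_k -> 'cV[R]_n),
     (forall i, C (p i)) /\ \sum_(i < k) l i = 1 /\ x = \sum_(i < k) l i *: p i].

Definition relint (n : nat) (C : set 'cV[R]_n) : set 'cV[R]_n :=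
  [set x | C x /\ exists r : R, 0 < r /\
     forall z, aff C z -> enorm (z - x) < r -> C z].

Definition sigma_min (m n : nat) (A : 'M[R]_(m, n)) (V : set 'cV[R]_n) : R :=
  inf [set enorm (A *m x) | x in [set x | V x /\ enorm x = 1]].

End Defs.

(* Let F be the complementary face, X the primal solution set, V = aff F (a
   linear subspace since 0 \in F) and r the radius of a ball of V around xs
   contained in F. By complementary slackness, every point of F with A x = b
   lies in X. For u \in V with A u = b and z \in F, the point
   xs + (r / (2 |u - z|)) (u - z) is in F, and its convex combination with z
   lying on the segment [xs, u] is in X; hence
   r dist(u, X) <= 2 |u - xs| dist(u, F). As X is bounded, F \cap ker A = 0,
   and compactness of the unit sphere upgrades this to
   a |d| <= |A d| + dist(d, F); for d = u - xs it bounds |u - xs| by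
   (|xs| + dist(u, F)) / a, so dist(u, X) is linear in dist(u, F). A general
   x \in V is first moved into {A u = b} by a bounded right inverse of A on V.
   If X = {xs}, the same shift shows that A is injective on V, so
   sigma_min > 0 and dist(x, X) <= |x - xs| <= |A x - b| / sigma_min. *)

From mathcomp Require Import all_boot all_order all_algebra.
From mathcomp Require Import all_classical all_reals all_analysis.
From mathcomp Require Import ring lra.
Import numFieldNormedType.Exports.
Import Order.TTheory GRing.Theory Num.Theory.
Set Implicit Arguments. Unset Strict Implicit. Unset Printing Implicit Defensive.
Local Open Scope classical_set_scope.
Local Open Scope ring_scope.

Section Euclidean.
Variable R : realType.
Implicit Types (m n : nat).

Lemma dotvE n (u v : 'cV[R]_n) : dotv u v = (u^T *m v) 0 0.
Proof. by rewrite /dotv mxE; apply: eq_bigr => i _; rewrite mxE. Qed.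

Lemma dotvC n (u v : 'cV[R]_n) : dotv u v = dotv v u.
Proof. by rewrite /dotv; apply: eq_bigr => i _; rewrite mulrC. Qed.

Lemma dotvDl n (u v w : 'cV[R]_n) : dotv (u + v) w = dotv u w + dotv v w.
Proof. by rewrite /dotv -big_split; apply: eq_bigr => i _; rewrite !mxE mulrDl. Qed.

Lemma dotvZl n a (u w : 'cV[R]_n) : dotv (a *: u) w = a * dotv u w.
Proof. by rewrite /dotv mulr_sumr; apply: eq_bigr => i _; rewrite !mxE mulrA. Qed.

Lemma dotvBl n (u v w : 'cV[R]_n) : dotv (u - v) w = dotv u w - dotv v w.
Proof. by rewrite dotvDl -scaleN1r dotvZl mulN1r. Qed.

Lemma dotv0l n (w : 'cV[R]_n) : dotv 0 w = 0.
Proof. by rewrite -(scale0r 0) dotvZl mul0r. Qed.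

Lemma dotvDr n (u v w : 'cV[R]_n) : dotv w (u + v) = dotv w u + dotv w v.
Proof. by rewrite dotvC dotvDl !(dotvC w). Qed.

Lemma dotvZr n a (u w : 'cV[R]_n) : dotv w (a *: u) = a * dotv w u.
Proof. by rewrite dotvC dotvZl dotvC. Qed.

Lemma dotvBr n (u v w : 'cV[R]_n) : dotv w (u - v) = dotv w u - dotv w v.
Proof. by rewrite dotvC dotvBl !(dotvC w). Qed.

Lemma dotv_mulmx m n (M : 'M[R]_(m, n)) (u : 'cV[R]_m) (v : 'cV[R]_n) :
  dotv u (M *m v) = dotv (M^T *m u) v.
Proof. by rewrite !dotvE trmx_mul trmxK mulmxA. Qed.

Lemma dotvvE n (u : 'cV[R]_n) : dotv u u = \sum_i u i 0 ^+ 2.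
Proof. by apply: eq_bigr => i _; rewrite expr2. Qed.

Lemma dotvv_ge0 n (u : 'cV[R]_n) : 0 <= dotv u u.
Proof. by rewrite dotvvE sumr_ge0 // => i _; rewrite sqr_ge0. Qed.

Lemma dotvv_eq0 n (u : 'cV[R]_n) : (dotv u u == 0) = (u == 0).
Proof.
apply/idP/eqP => [|->]; last by rewrite dotv0l.
rewrite dotvvE psumr_eq0 => [/allP u0|i _]; last exact: sqr_ge0.
apply/matrixP => i j; rewrite (ord1 j) mxE.
by apply/eqP; rewrite -sqrf_eq0; apply: u0; rewrite mem_index_enum.
Qed.

Lemma enorm_ge0 n (u : 'cV[R]_n) : 0 <= enorm u.
Proof. exact: sqrtr_ge0. Qed.

Lemma enorm_sqr n (u : 'cV[R]_n) : enorm u ^+ 2 = dotv u u.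
Proof. by rewrite sqr_sqrtr // dotvv_ge0. Qed.

Lemma enorm_eq0 n (u : 'cV[R]_n) : (enorm u == 0) = (u == 0).
Proof. by rewrite -sqrf_eq0 enorm_sqr dotvv_eq0. Qed.

Lemma enorm_gt0 n (u : 'cV[R]_n) : (0 < enorm u) = (u != 0).
Proof. by rewrite lt_neqAle enorm_ge0 andbT eq_sym enorm_eq0. Qed.

Lemma enorm0 n : enorm (0 : 'cV[R]_n) = 0.
Proof. by apply/eqP; rewrite enorm_eq0. Qed.

Lemma enormZ n a (u : 'cV[R]_n) : enorm (a *: u) = `|a| * enorm u.
Proof. by rewrite /enorm dotvZl dotvZr mulrA -expr2 sqrtrM ?sqr_ge0 // sqrtr_sqr. Qed.

Lemma enorm_normalize n (u : 'cV[R]_n) : u != 0 -> enorm ((enorm u)^-1 *: u) = 1.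
Proof.
by move=> u_neq0; rewrite enormZ ger0_norm ?invr_ge0 ?enorm_ge0 // mulVf // enorm_eq0.
Qed.

Lemma enormN n (u : 'cV[R]_n) : enorm (- u) = enorm u.
Proof. by rewrite -scaleN1r enormZ normrN normr1 mul1r. Qed.

Lemma enormB n (u v : 'cV[R]_n) : enorm (u - v) = enorm (v - u).
Proof. by rewrite -enormN opprB. Qed.

(* Expand [0 <= <c u - b v, c u - b v>] with [b = <u, v>] and [c = <v, v>]. *)
Lemma dotv_cauchy_schwarz n (u v : 'cV[R]_n) : `|dotv u v| <= enorm u * enorm v.
Proof.
rewrite -sqrtrM ?dotvv_ge0 // -sqrtr_sqr ler_sqrt ?mulr_ge0 ?dotvv_ge0 //.
set a := dotv u u; set b := dotv u v; set c := dotv v v.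
have [c0 | c_neq0] := eqVneq c 0.
  move/eqP: c0; rewrite dotvv_eq0 => /eqP v0.
  by rewrite /b v0 dotvC dotv0l expr0n mulr_ge0 ?dotvv_ge0.
have c_gt0 : 0 < c by rewrite lt_neqAle eq_sym c_neq0 dotvv_ge0.
have := dotvv_ge0 (c *: u - b *: v).
rewrite dotvBl !dotvBr !dotvZl !dotvZr -/a -/c (dotvC v u) -/b => h.
have : 0 <= c * (a * c - b ^+ 2) by rewrite expr2; nra.
by rewrite pmulr_rge0 // subr_ge0.
Qed.

Lemma enormD n (u v : 'cV[R]_n) : enorm (u + v) <= enorm u + enorm v.
Proof.
rewrite -(ler_pXn2r (_ : 0 < 2)%N) ?nnegrE ?addr_ge0 ?enorm_ge0 //.
rewrite enorm_sqr dotvDl !dotvDr (dotvC v u) sqrrD !enorm_sqr.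
have := dotv_cauchy_schwarz u v; rewrite ler_norml => /andP [_ h].
lra.
Qed.

Lemma enorm_triangle n (u v w : 'cV[R]_n) : enorm (u - w) <= enorm (u - v) + enorm (v - w).
Proof. by have := enormD (u - v) (v - w); rewrite addrA subrK. Qed.

Lemma enorm_lipschitz n (u v : 'cV[R]_n) : `|enorm u - enorm v| <= enorm (u - v).
Proof.
have := enorm_triangle u v 0; have := enorm_triangle v u 0.
rewrite !subr0 (enormB v u) ler_norml => h1 h2.
apply/andP; split; lra.
Qed.

Lemma ler_mx_entry_norm p q (M : 'M[R]_(p, q)) i j : `|M i j| <= `|M|.
Proof. by rewrite [leRHS]mx_normrE; apply/bigmax_geP; right; exists (i, j). Qed.

Lemma normr_le_enorm n (u : 'cV[R]_n) : `|u| <= enorm u.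
Proof.
rewrite [leLHS]mx_normrE; apply: bigmax_le => [|[i j] _ /=]; first exact: enorm_ge0.
rewrite (ord1 j) -(sqrtr_sqr (u i 0)) ler_sqrt ?dotvv_ge0 // dotvvE (bigD1 i) //=.
by rewrite lerDl sumr_ge0 // => k _; rewrite sqr_ge0.
Qed.

Lemma enorm_le_normr n (u : 'cV[R]_n) : enorm u <= Num.sqrt n%:R * `|u|.
Proof.
have -> : `|u| = Num.sqrt (`|u| ^+ 2) by rewrite sqrtr_sqr normr_id.
rewrite -sqrtrM ?ler0n // ler_sqrt ?mulr_ge0 ?sqr_ge0 //.
rewrite dotvvE -[n in n%:R]card_ord mulr_natl -sumr_const ler_sum // => i _.
by rewrite -real_normK ?num_real // lerXn2r ?nnegrE // ler_mx_entry_norm.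
Qed.

Lemma mulmx_enorm_bounded m n (M : 'M[R]_(m, n)) :
  exists2 k, 0 <= k & forall u, enorm (M *m u) <= k * enorm u.
Proof.
exists (Num.sqrt m%:R * `|M| *+ n); first by rewrite mulrn_wge0 ?mulr_ge0 ?sqrtr_ge0.
move=> u; apply: le_trans (enorm_le_normr _) _.
rewrite -mulrnAr -mulrA ler_wpM2l ?sqrtr_ge0 // [leLHS]mx_normrE.
apply: bigmax_le => [|[i j] _ /=]; first by rewrite mulr_ge0 ?mulrn_wge0 ?enorm_ge0.
rewrite (ord1 j) mxE mulrnAl -[n in _ *+ n]card_ord -sumr_const.
apply: le_trans (ler_norm_sum _ _ _) (ler_sum _ _) => k _.
rewrite normrM ler_pM ?ler_mx_entry_norm //.
exact: le_trans (ler_mx_entry_norm u k 0) (normr_le_enorm u).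
Qed.

End Euclidean.

Section Distance.
Variables (R : realType) (n : nat).
Implicit Types (C : set 'cV[R]_n) (x y z : 'cV[R]_n).

Lemma dist_ge0 x C : 0 <= dist x C.
Proof.
have [[z Cz] | C0] := pselect (C !=set0).
  by apply: lb_le_inf => [|_ [w _ <-]]; [exists (enorm (x - z)), z | exact: enorm_ge0].
rewrite /dist; suff -> : [set enorm (x - z) | z in C] = set0 by rewrite inf0.
by apply/seteqP; split => // t [w Cw _]; apply: C0; exists w.
Qed.

Lemma dist_le x C z : C z -> dist x C <= enorm (x - z).
Proof.
move=> Cz; apply: ge_inf; last by exists z.
by exists 0 => _ [w _ <-]; apply: enorm_ge0.
Qed.

Lemma dist_mem x C : C x -> dist x C = 0.
Proof.
by move=> Cx; apply/le_anti; rewrite dist_ge0 andbT -(enorm0 R n) -(subrr x) dist_le.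
Qed.

Lemma lb_le_mul_dist x C a k : 0 <= k -> C !=set0 ->
  (forall z, C z -> a <= k * enorm (x - z)) -> a <= k * dist x C.
Proof.
move=> k_ge0 [z0 Cz0] lb; have [k0 | k_neq0] := eqVneq k 0.
  by move: (lb z0 Cz0); rewrite k0 !mul0r.
have k_gt0 : 0 < k by rewrite lt_neqAle eq_sym k_neq0.
rewrite mulrC -ler_pdivrMr //; apply: lb_le_inf => [|_ [z Cz <-]].
  by exists (enorm (x - z0)), z0.
by rewrite ler_pdivrMr // mulrC lb.
Qed.

Lemma lb_le_dist x C a : C !=set0 ->
  (forall z, C z -> a <= enorm (x - z)) -> a <= dist x C.
Proof.
by move=> C0 lb; rewrite -[dist _ _]mul1r; apply: lb_le_mul_dist => // z /lb; rewrite mul1r.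
Qed.

Lemma dist_triangle x y C : C !=set0 -> dist x C <= enorm (x - y) + dist y C.
Proof.
move=> C0; rewrite addrC -lerBlDr; apply: lb_le_dist => // z Cz.
by rewrite lerBlDr addrC (le_trans _ (enorm_triangle x y z)) // dist_le.
Qed.

Lemma dist_lipschitz x y C : C !=set0 -> `|dist x C - dist y C| <= enorm (x - y).
Proof.
move=> C0; have := dist_triangle x y C0; have := dist_triangle y x C0.
by rewrite (enormB y) ler_norml => h1 h2; apply/andP; split; lra.
Qed.

Lemma dist_coneZ_le C t x : is_cone C -> 0 <= t -> dist (t *: x) C <= t * dist x C.
Proof.
move=> [C0 CZ] t_ge0; apply: lb_le_mul_dist => [||z Cz]; [done | by exists 0 |].
by apply: le_trans (dist_le _ (CZ z t Cz t_ge0)) _; rewrite -scalerBr enormZ ger0_norm.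
Qed.

End Distance.

Section Compactness.
Variable R : realType.

Lemma lipschitz_continuous (V W : normedModType R) (f : V -> W) k :
  (forall x y, `|f x - f y| <= k * `|x - y|) -> continuous f.
Proof.
move=> f_lip x P /nbhs_ballP [e e_gt0 fP]; apply/nbhs_ballP.
have k1_gt0 : 0 < `|k| + 1 by rewrite ltr_wpDl.
exists (e / (`|k| + 1)) => [|y]; first by rewrite /= divr_gt0.
rewrite -!ball_normE /ball_ /= ltr_pdivlMr // => xy; apply: fP.
rewrite -ball_normE /ball_ /=; apply: le_lt_trans (f_lip x y) _.
apply: le_lt_trans xy; have := ler_norm k; have := normr_ge0 (x - y); nra.
Qed.

Lemma enorm_lipschitz_continuous n (f : 'cV[R]_n -> R) k :
  (forall x y, `|f x - f y| <= k * enorm (x - y)) -> continuous f.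
Proof.
move=> f_lip; apply: (@lipschitz_continuous _ _ _ (`|k| * Num.sqrt n%:R)) => x y.
apply: le_trans (f_lip x y) _; rewrite -mulrA (le_trans (ler_wpM2r (enorm_ge0 _) (ler_norm k))) //.
by rewrite ler_wpM2l // enorm_le_normr.
Qed.

Lemma normr_trmx m n (M : 'M[R]_(m, n)) : `|M^T| = `|M|.
Proof.
suff le_tr p q (N : 'M[R]_(p, q)) : `|N^T| <= `|N|.
  by apply/le_anti; rewrite le_tr -{1}(trmxK M) le_tr.
rewrite [leLHS]mx_normrE; apply: bigmax_le => [|[i j] _ /=]; first exact: normr_ge0.
by rewrite mxE ler_mx_entry_norm.
Qed.

Lemma trmx_continuous m n : continuous (@trmx R m n).
Proof. by apply: (@lipschitz_continuous _ _ _ 1) => M N; rewrite -linearB normr_trmx mul1r. Qed.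

Lemma enorm_continuous n : continuous (@enorm R n).
Proof. by apply: (@enorm_lipschitz_continuous _ _ 1) => x y; rewrite mul1r enorm_lipschitz. Qed.

Lemma enorm_sphere_compact n : compact [set u : 'cV[R]_n | enorm u = 1].
Proof.
have -> : [set u : 'cV[R]_n | enorm u = 1] = trmx @` [set z | enorm z^T = 1].
  apply/seteqP; split => [u u1 | _ [z z1 <-] //].
  by exists u^T; rewrite /= trmxK.
apply: continuous_compact; first exact/continuous_subspaceT/trmx_continuous.
apply: bounded_closed_compact.
  exists 1; split => // M M1 z /= z1; apply: le_trans (ltW M1).
  by rewrite -normr_trmx -z1 normr_le_enorm.
apply: (@preimage_closed _ _ (fun z : 'rV[R]_n => enorm z^T) [set x | x = 1]) => [z _|].
  exact: continuous_comp (@trmx_continuous 1 n z) (@enorm_continuous n _).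
exact: closed_eq.
Qed.

Lemma compact_continuous_pos_lb (T : topologicalType) (S : set T) (g : T -> R) :
  compact S -> continuous g -> (forall x, S x -> 0 < g x) ->
  exists2 a, 0 < a & forall x, S x -> a <= g x.
Proof.
move=> S_cpt g_cont g_gt0.
have gS_closed : closed (g @` S).
  exact/(compact_closed (@Rhausdorff R))/continuous_compact/S_cpt/continuous_subspaceT.
have gS0 : ~ (g @` S) 0 by move=> [x Sx gx0]; move: (g_gt0 x Sx); rewrite gx0 ltxx.
move: (closed_openC gS_closed); rewrite openE => /(_ 0 gS0) /nbhs_ballP [e e_gt0 ball_out].
exists e => // x Sx; rewrite leNgt; apply/negP => gx_lt; apply: (ball_out (g x)); last by exists x.
by rewrite -ball_normE /ball_ /= sub0r normrN gtr0_norm ?g_gt0.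
Qed.

End Compactness.

Section Cones.
Variables (R : realType) (n : nat).
Implicit Types (C K : set 'cV[R]_n) (s x y : 'cV[R]_n).

Lemma cone_convexD C x y : is_cone C -> is_convex C -> C x -> C y -> C (x + y).
Proof.
move=> [_ CZ] Cconv Cx Cy; have half01 : 0 <= (2^-1 : R) <= 1.
  by rewrite invr_ge0 ler0n invf_le1 ?ler1n.
have := CZ _ 2 (Cconv _ _ _ Cx Cy half01) (ler0n _ 2).
by rewrite (_ : 1 - 2^-1 = 2^-1 :> R) -?scalerDr ?scalerA ?mulfV ?scale1r //; field.
Qed.

Lemma comp_face_cone K s : is_cone K -> is_cone (comp_face K s).
Proof.
move=> [K0 KZ]; split=> [|x t [Kx xs] t_ge0]; first by split; rewrite ?dotv0l.
by split; [apply: KZ | rewrite dotvZl xs mulr0].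
Qed.

Lemma comp_face_convex K s : is_convex K -> is_convex (comp_face K s).
Proof.
move=> Kconv x y t [Kx xs] [Ky ys] t01; split; first exact: Kconv.
by rewrite dotvDl !dotvZl xs ys !mulr0 addr0.
Qed.

Lemma comp_face_closed K s : closed K -> closed (comp_face K s).
Proof.
move=> Kcl; apply: closedI => //.
apply: (@preimage_closed _ _ (fun x => dotv x s) [set 0]) => [x _|]; last exact: closed_eq.
apply: (@enorm_lipschitz_continuous _ _ _ (enorm s)) => {x} x y.
by rewrite -dotvBl mulrC dotv_cauchy_schwarz.
Qed.

Lemma closed_dist_eq0 C x : closed C -> C !=set0 -> dist x C = 0 -> C x.
Proof.
move=> Ccl C0 dx0; apply: contrapT => nCx.
move: (closed_openC Ccl); rewrite openE => /(_ x nCx) /nbhs_ballP [e e_gt0 ball_out].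
suff : e <= dist x C by rewrite dx0 leNgt e_gt0.
apply: lb_le_dist => // z Cz; rewrite leNgt; apply/negP => xz_lt.
apply: (ball_out z) => //; rewrite -ball_normE /ball_ /=.
exact: le_lt_trans (normr_le_enorm _) xz_lt.
Qed.

(* [|A d| + dist d C] has a positive minimum on the compact unit sphere, and is
   positively homogeneous up to [<=] since [C] is a cone. *)
Lemma cone_ker_error_bound m C (A : 'M[R]_(m, n)) :
  is_cone C -> closed C -> (forall d, C d -> A *m d = 0 -> d = 0) ->
  exists2 a, 0 < a & forall d, a * enorm d <= enorm (A *m d) + dist d C.
Proof.
move=> Ccone Ccl kerC; have C0 : C !=set0 by exists 0; case: Ccone.
pose g d := enorm (A *m d) + dist d C.
have g_cont : continuous g.
  have [k k_ge0 Ak] := mulmx_enorm_bounded A.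
  apply: (@enorm_lipschitz_continuous _ _ _ (k + 1)) => x y.
  rewrite /g opprD addrACA mulrDl mul1r (le_trans (ler_normD _ _)) //.
  apply: lerD; last exact: dist_lipschitz.
  by rewrite (le_trans (enorm_lipschitz _ _)) // -mulmxBr Ak.
have g_gt0 d : enorm d = 1 -> 0 < g d.
  move=> d1; rewrite lt_def addr_ge0 ?enorm_ge0 ?dist_ge0 // andbT.
  rewrite paddr_eq0 ?enorm_ge0 ?dist_ge0 //; apply/negP => /andP [Ad0 dd0].
  move: Ad0; rewrite enorm_eq0 => /eqP /(kerC _ (closed_dist_eq0 Ccl C0 (eqP dd0))) d0.
  by move: d1; rewrite d0 enorm0 => /eqP; rewrite eq_sym oner_eq0.
have [a a_gt0 a_le] := compact_continuous_pos_lb (@enorm_sphere_compact R n) g_cont g_gt0.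
exists a => // d; have [-> | d_neq0] := eqVneq d 0.
  by rewrite enorm0 mulr0 mulmx0 enorm0 add0r dist_ge0.
have t_gt0 : 0 < enorm d by rewrite enorm_gt0.
have t_ge0 : 0 <= (enorm d)^-1 by rewrite invr_ge0 ltW.
have := a_le _ (enorm_normalize d_neq0); rewrite /g -scalemxAr enormZ ger0_norm // => a_le_d.
rewrite mulrC -ler_pdivlMl // mulrDr; apply: le_trans a_le_d _.
by rewrite lerD2l dist_coneZ_le.
Qed.

End Cones.

Section Subspaces.
Variables (R : realType) (n : nat).
Implicit Types (C : set 'cV[R]_n) (x y : 'cV[R]_n).

Definition mxspan k (W : 'M[R]_(k, n)) : set 'cV[R]_n := [set x | (x^T <= W)%MS].

Section Mxspan.
Variables (k : nat) (W : 'M[R]_(k, n)).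

Lemma mxspanD x y : mxspan W x -> mxspan W y -> mxspan W (x + y).
Proof. by move=> Wx Wy; rewrite /mxspan /= linearD addmx_sub. Qed.

Lemma mxspanZ a x : mxspan W x -> mxspan W (a *: x).
Proof. by move=> Wx; rewrite /mxspan /= linearZ scalemx_sub. Qed.

Lemma mxspanB x y : mxspan W x -> mxspan W y -> mxspan W (x - y).
Proof. by move=> Wx Wy; rewrite -scaleN1r; apply: mxspanD => //; apply: mxspanZ. Qed.

Lemma aff_sub_mxspan C : C `<=` mxspan W -> aff C `<=` mxspan W.
Proof.
move=> CW _ [p [l [q [Cq [_ ->]]]]]; rewrite /mxspan /= raddf_sum.
by apply: summx_sub => i _; apply: mxspanZ; apply: CW.
Qed.

(* The point [0] of [C] absorbs the coefficient [1 - \sum_i u_i]. *)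
Lemma mxspan_sub_aff C : C 0 -> (forall i, C (row i W)^T) -> mxspan W `<=` aff C.
Proof.
move=> C0 CW x xW; set u := x^T *m pinvmx W.
exists k.+1, (fun j => if unlift ord0 j is Some i then u 0 i else 1 - \sum_i u 0 i).
exists (fun j => if unlift ord0 j is Some i then (row i W)^T else 0).
split; [by move=> j; case: unlift | rewrite !big_ord_recl !unlift_none /=; split].
  by under [X in _ + X]eq_bigr => i _ do rewrite liftK; rewrite subrK.
rewrite scaler0 add0r; under eq_bigr => i _ do rewrite liftK.
apply: trmx_inj; rewrite -(mulmxKpV xW) -/u mulmx_sum_row raddf_sum.
by apply: eq_bigr => i _; apply/matrixP => a b; rewrite !mxE.
Qed.

End Mxspan.

Lemma mem_aff C x : C x -> aff C x.
Proof. by move=> Cx; exists 1%N, (fun=> 1), (fun=> x); rewrite !big_ord1 scale1r. Qed.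

(* A family of points of [C] of maximal rank spans [aff C]. *)
Lemma aff_mxspan C : C 0 -> exists k (W : 'M[R]_(k, n)), aff C = mxspan W.
Proof.
move=> C0; pose spanned (r : nat) := `[< exists k (W : 'M[R]_(k, n)),
  (forall i, C (row i W)^T) /\ \rank W = r >].
have spanned0 : spanned 0%N.
  by apply/asboolP; exists 0%N, 0; split; [case | rewrite mxrank0].
have spanned_le r : spanned r -> (r <= n)%N.
  by move=> /asboolP [k [W [_ <-]]]; apply: rank_leq_col.
case: (ex_maxnP (ex_intro spanned _ spanned0) spanned_le).
move=> r /asboolP [k [W [CW <-]]] rank_max.
exists k, W; apply/seteqP; split; last exact: mxspan_sub_aff.
apply: aff_sub_mxspan => f Cf; apply: contrapT => /negP fW.
have : spanned (\rank (col_mx W f^T)).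
  apply/asboolP; exists (k + 1)%N, (col_mx W f^T); split => // i.
  case: (split_ordP i) => j ->; first by rewrite rowKu.
  rewrite rowKd (_ : (row j f^T)^T = f) //.
  by apply/matrixP => a b; rewrite !mxE (ord1 j) (ord1 b).
move=> /rank_max; rewrite -addsmxE; apply/negP; rewrite -ltnNge.
have [le_rk eq_rk] := mxrank_leqif_sup (addsmxSl W f^T).
by rewrite ltn_neqAle le_rk andbT eq_rk addsmx_sub submx_refl (negbTE fW).
Qed.

End Subspaces.

Section RestrictedMap.
Variables (R : realType) (m n k : nat) (A : 'M[R]_(m, n)) (W : 'M[R]_(k, n)).

(* [v^T := (A d)^T (pinvmx (W A^T)) W] lies in the row space of [W] and
   [v^T A^T = (A d)^T], since [(A d)^T = d^T A^T] lies in the row space of [W A^T]. *)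
Lemma mxspan_bounded_preimage : exists2 c, 0 <= c & forall d, mxspan W d ->
  exists2 v, mxspan W v & A *m v = A *m d /\ enorm v <= c * enorm (A *m d).
Proof.
set M := W *m A^T; set G := pinvmx M *m W.
have [c c_ge0 Gc] := mulmx_enorm_bounded G^T.
exists c => // d dW; exists (G^T *m (A *m d)); last split; last exact: Gc.
  by rewrite /mxspan /= trmx_mul trmxK /G mulmxA; apply: submxMl.
have AdM : ((A *m d)^T <= M)%MS.
  by rewrite trmx_mul -(mulmxKpV dW) -(mulmxA _ W); apply: submxMl.
apply: trmx_inj; rewrite trmx_mul [(G^T *m _)^T]trmx_mul trmxK /G.
by rewrite mulmxA -(mulmxA _ W) (mulmxKpV AdM).
Qed.

Lemma mxspan_injective_bound : (forall d, mxspan W d -> A *m d = 0 -> d = 0) ->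
  exists2 c, 0 < c & forall d, mxspan W d -> c * enorm d <= enorm (A *m d).
Proof.
move=> kerW; have [c c_ge0 preim] := mxspan_bounded_preimage.
have c1_gt0 : 0 < c + 1 by rewrite ltr_wpDl.
exists (c + 1)^-1 => [|d dW]; first by rewrite invr_gt0.
have [v vW [Av v_le]] := preim d dW.
have dv : d = v.
  apply/eqP; rewrite -subr_eq0; apply/eqP; apply: kerW; first exact: mxspanB.
  by rewrite mulmxBr Av subrr.
rewrite dv -ler_pdivlMl ?invr_gt0 // invrK Av (le_trans v_le) //.
by rewrite ler_wpM2r ?enorm_ge0 ?lerDl.
Qed.

Lemma sigma_min_mul_le d : mxspan W d -> sigma_min A (mxspan W) * enorm d <= enorm (A *m d).
Proof.
move=> dW; have [-> | d_neq0] := eqVneq d 0; first by rewrite enorm0 mulr0 enorm_ge0.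
have d_gt0 : 0 < enorm d by rewrite enorm_gt0.
rewrite -ler_pdivlMr // mulrC; apply: ge_inf.
  by exists 0 => _ [y _ <-]; apply: enorm_ge0.
exists ((enorm d)^-1 *: d); first by split; [apply: mxspanZ | apply: enorm_normalize].
by rewrite -scalemxAr enormZ ger0_norm // invr_ge0 ltW.
Qed.

Lemma sigma_min_gt0 d : (forall d, mxspan W d -> A *m d = 0 -> d = 0) ->
  mxspan W d -> d != 0 -> 0 < sigma_min A (mxspan W).
Proof.
move=> kerW dW d_neq0; have [c c_gt0 c_le] := mxspan_injective_bound kerW.
apply: lt_le_trans c_gt0 _; apply: lb_le_inf => [|_ [y [yW y1] <-]].
  exists (enorm (A *m ((enorm d)^-1 *: d))), ((enorm d)^-1 *: d) => //.
  by split; [apply: mxspanZ | apply: enorm_normalize].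
by rewrite -[c]mulr1 -y1 c_le.
Qed.

End RestrictedMap.

Lemma bounded_ray_eq0 (R : realType) (V : normedModType R) (S : set V) x d :
  bounded_set S -> (forall t, 0 <= t -> S (x + t *: d)) -> d = 0.
Proof.
move=> [M [_ SM]] ray; apply/eqP; apply: contraT => d_neq0.
have d_gt0 : 0 < `|d| by rewrite normr_gt0.
have {}SM y : S y -> `|y| <= M + 1 by apply: SM; rewrite ltrDl.
have M1_ge0 : 0 <= M + 1 := le_trans (normr_ge0 _) (SM _ (ray 0 (lexx 0))).
pose t := (M + 1 + `|x| + 1) / `|d|.
have t_ge0 : 0 <= t by rewrite /t divr_ge0 ?(ltW d_gt0) //; have := normr_ge0 x; lra.
suff : M + 1 < `|x + t *: d| by rewrite ltNge (SM _ (ray t t_ge0)).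
have := ler_normB (x + t *: d) x; rewrite {1}(addrC x) addrK normrZ (ger0_norm t_ge0).
by rewrite /t mulfVK ?gt_eqF //; lra.
Qed.

Section ConicErrorBound.
Variables (R : realType) (m n : nat) (K : set 'cV[R]_n).
Variables (A : 'M[R]_(m, n)) (b : 'cV[R]_m) (c : 'cV[R]_n) (ys : 'cV[R]_m).
Let s := c - A^T *m ys.
Local Notation F := (comp_face K s).
Local Notation X := (primal_sol A b c K).

Hypothesis ys_feasible : dual_feasible A c K ys.

(* [<c, x> = <s, x> + <ys, A x>], and [<s, .>] is nonnegative on [K] and null on [F]. *)
Lemma comp_face_primal_sol y : F y -> A *m y = b -> X y.
Proof.
have cE x : dotv c x = dotv s x + dotv ys (A *m x) by rewrite dotv_mulmx -dotvDl /s subrK.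
move=> [Ky ys0] Ay; split=> // x' [Ax' Kx'].
by rewrite !cE Ay Ax' dotvC ys0 add0r lerDr; apply: ys_feasible.
Qed.

Hypotheses (K_proper : proper_cone K) (X_bounded : bounded_set X).
Variables (xs : 'cV[R]_n) (k : nat) (W : 'M[R]_(k, n)) (r : R).
Hypotheses (xs_sol : X xs) (xs_face : F xs) (affF : aff F = mxspan W).
Hypotheses (r_gt0 : 0 < r)
  (ball_sub_face : forall z, mxspan W z -> enorm (z - xs) < r -> F z).

Let F_cone : is_cone F.
Proof. by apply: comp_face_cone; case: K_proper. Qed.

Let F_convex : is_convex F.
Proof. by apply: comp_face_convex; case: K_proper. Qed.

Let F_closed : closed F.
Proof. by apply: comp_face_closed; case: K_proper. Qed.

Lemma face_sub_mxspan : F `<=` mxspan W.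
Proof. by rewrite -affF => z; apply: mem_aff. Qed.

Lemma face_shift d : mxspan W d -> F (xs + (r / (2 * enorm d)) *: d).
Proof.
move=> dW; apply: ball_sub_face.
  by apply: mxspanD; [apply: face_sub_mxspan | apply: mxspanZ].
rewrite addrAC subrr add0r enormZ ger0_norm ?divr_ge0 ?mulr_ge0 ?enorm_ge0 ?(ltW r_gt0) //.
have [-> | d_neq0] := eqVneq d 0; first by rewrite enorm0 mulr0.
rewrite (_ : r / (2 * enorm d) * enorm d = r / 2); last by field; rewrite enorm_eq0.
by rewrite ltr_pdivrMr // ltr_pMr // ltr1n.
Qed.

Let Axs : A *m xs = b. Proof. by case: xs_sol => [[]]. Qed.

Lemma face_kerA_eq0 d : F d -> A *m d = 0 -> d = 0.
Proof.
move=> Fd Ad0; apply: (bounded_ray_eq0 X_bounded (x := xs)) => t t_ge0.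
apply: comp_face_primal_sol; last by rewrite mulmxDr -scalemxAr Ad0 scaler0 addr0.
by apply: cone_convexD => //; apply: F_cone.2.
Qed.

(* Push [xs] towards [u - z] inside the face, then pull back to [z]: the
   convex combination lands on the segment [[xs, u]], inside [X]. *)
Lemma dist_sol_le_face_point u z : mxspan W u -> A *m u = b -> F z ->
  dist u X * r <= 2 * enorm (u - z) * enorm (u - xs).
Proof.
move=> uW Au Fz; set w := enorm (u - z).
have [w0 | w_neq0] := eqVneq w 0.
  move/eqP: w0; rewrite enorm_eq0 subr_eq0 => /eqP uz.
  have Xu : X u by apply: comp_face_primal_sol => //; rewrite uz.
  by rewrite dist_mem // mul0r !mulr_ge0 ?enorm_ge0.
have w_gt0 : 0 < w by rewrite lt_neqAle eq_sym w_neq0 enorm_ge0.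
set a := r / (2 * w); set l := 2 * w / (r + 2 * w).
have rw_gt0 : 0 < r + 2 * w by rewrite addr_gt0 ?mulr_gt0.
have Fp : F (xs + a *: (u - z)) := face_shift (mxspanB uW (face_sub_mxspan Fz)).
have l01 : 0 <= l <= 1.
  rewrite /l divr_ge0 ?(ltW rw_gt0) ?mulr_ge0 ?(ltW w_gt0) //=.
  by rewrite ler_pdivrMr // mul1r lerDr (ltW r_gt0).
have la : l * a = 1 - l by rewrite /l /a; field; rewrite !gt_eqF.
have Xy : X (l *: xs + (1 - l) *: u).
  apply: comp_face_primal_sol.
    have -> : l *: xs + (1 - l) *: u = l *: (xs + a *: (u - z)) + (1 - l) *: z.
      by apply/matrixP => i j; rewrite !mxE mulrDr mulrA la; ring.
    exact: F_convex.
  by rewrite mulmxDr -!scalemxAr Axs Au -scalerDl addrC subrK scale1r.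
have := dist_le u Xy.
have -> : u - (l *: xs + (1 - l) *: u) = l *: (u - xs) by apply/matrixP => i j; rewrite !mxE; ring.
rewrite enormZ ger0_norm; last by case/andP: l01.
have lr : l * r <= 2 * w by rewrite /l mulrAC ler_pdivrMr //; nra.
have := enorm_ge0 (u - xs); have := dist_ge0 u X; nra.
Qed.

Lemma dist_sol_le_dist_face u : mxspan W u -> A *m u = b ->
  dist u X * r <= 2 * enorm (u - xs) * dist u F.
Proof.
move=> uW Au; apply: lb_le_mul_dist; [by rewrite mulr_ge0 ?enorm_ge0 | by exists xs |].
by move=> z Fz; rewrite mulrAC dist_sol_le_face_point.
Qed.

Lemma feasible_dist_sol_bound : exists2 kappa, 0 <= kappa &
  forall u, mxspan W u -> A *m u = b -> dist u X <= kappa * dist u F.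
Proof.
have [al al_gt0 al_le] := cone_ker_error_bound F_cone F_closed face_kerA_eq0.
have ral_gt0 : 0 < r * al by rewrite mulr_gt0.
exists (4 * enorm xs / (r * al) + 2 / al) => [|u uW Au].
  by rewrite addr_ge0 ?divr_ge0 ?mulr_ge0 ?enorm_ge0 ?ler0n ?(ltW r_gt0) ?(ltW al_gt0).
set D := u - xs; set delta := dist u F.
have dX_le : dist u X <= enorm D := dist_le u xs_sol.
have D_le : al * enorm D <= enorm xs + delta.
  have := al_le D; rewrite mulmxBr Au Axs subrr enorm0 add0r => /le_trans; apply.
  have := dist_triangle D u (ex_intro _ _ xs_face).
  by rewrite /D addrAC subrr add0r enormN; apply.
have dXr := dist_sol_le_dist_face uW Au; rewrite -/D -/delta in dXr.
rewrite -(ler_pM2r ral_gt0) mulrAC.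
have -> : (4 * enorm xs / (r * al) + 2 / al) * (r * al) = 4 * enorm xs + 2 * r.
  by field; rewrite !gt_eqF.
have := enorm_ge0 xs; have := dist_ge0 u F; rewrite -/delta => delta_ge0 xs_ge0.
have [delta_le | delta_gt] := lerP delta (enorm xs).
  have := ler_wpM2r (ltW al_gt0) dXr.
  have : 2 * delta * (al * enorm D) <= 2 * delta * (2 * enorm xs).
    by rewrite ler_wpM2l ?mulr_ge0 //; lra.
  have := mulr_ge0 (mulr_ge0 (ler0n _ 2) (ltW r_gt0)) delta_ge0; nra.
have := ler_wpM2r (ltW ral_gt0) dX_le.
have : r * (al * enorm D) <= r * (2 * delta) by rewrite ler_wpM2l ?(ltW r_gt0) //; lra.
have := mulr_ge0 (mulr_ge0 (ler0n _ 4) xs_ge0) delta_ge0; nra.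
Qed.

Lemma mxspan_error_bound : exists gamma gamma' : R, 0 <= gamma /\ 0 <= gamma' /\
  forall x, mxspan W x -> dist x X <= gamma * enorm (A *m x - b) + gamma' * dist x F.
Proof.
have [kappa kappa_ge0 feas] := feasible_dist_sol_bound.
have [c0 c0_ge0 preim] := mxspan_bounded_preimage A W.
exists (c0 * (1 + kappa)), kappa; split; first by rewrite mulr_ge0 // addr_ge0.
split=> // x xW; have xsW := face_sub_mxspan xs_face.
have [v vW [Av v_le]] := preim (x - xs) (mxspanB xW xsW).
rewrite mulmxBr Axs in Av v_le.
have Axv : A *m (x - v) = b by rewrite mulmxBr Av opprB addrC subrK.
have xX := dist_triangle x (x - v) (ex_intro _ _ xs_sol).
have xvF := dist_triangle (x - v) x (ex_intro _ _ xs_face).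
rewrite opprB addrCA subrr addr0 in xX; rewrite addrAC subrr add0r enormN in xvF.
have := feas _ (mxspanB xW vW) Axv.
have := ler_wpM2l kappa_ge0 xvF; have := ler_wpM2l (addr_ge0 ler01 kappa_ge0) v_le.
lra.
Qed.

Lemma mxspan_kerA_eq0 : X = [set xs] -> forall d, mxspan W d -> A *m d = 0 -> d = 0.
Proof.
move=> X1 d dW Ad0; apply/eqP; apply: contraT => d_neq0.
have a_gt0 : 0 < r / (2 * enorm d) by rewrite divr_gt0 ?mulr_gt0 ?enorm_gt0.
have : X (xs + (r / (2 * enorm d)) *: d).
  apply: comp_face_primal_sol; first exact: face_shift.
  by rewrite mulmxDr -scalemxAr Ad0 scaler0 addr0.
rewrite X1 => /eqP.
by rewrite -subr_eq0 addrAC subrr add0r scaler_eq0 (gt_eqF a_gt0) (negbTE d_neq0).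
Qed.

Lemma singleton_error_bound : X = [set xs] -> forall x, mxspan W x ->
  dist x X <= (sigma_min A (mxspan W))^-1 * enorm (A *m x - b).
Proof.
move=> X1 x xW; have dW := mxspanB xW (face_sub_mxspan xs_face).
apply: le_trans (dist_le x xs_sol) _; rewrite -Axs -mulmxBr.
have [-> | d_neq0] := eqVneq (x - xs) 0; first by rewrite enorm0 mulmx0 enorm0 mulr0.
have sig_gt0 := sigma_min_gt0 (mxspan_kerA_eq0 X1) dW d_neq0.
by rewrite ler_pdivlMl // sigma_min_mul_le.
Qed.

End ConicErrorBound.

Unset Implicit Arguments.

Theorem lemma2 (R : realType) (m n : nat) (K : set 'cV[R]_n)
  (A : 'M[R]_(m, n)) (b : 'cV[R]_m) (c : 'cV[R]_n)
  (xs : 'cV[R]_n) (ys : 'cV[R]_m) :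
  proper_cone K ->
  strong_duality A b c K ->
  primal_sol A b c K xs ->
  dual_sol A b c K ys ->
  relint (comp_face K (c - A^T *m ys)) xs ->
  (exists gamma gamma' : R, 0 <= gamma /\ 0 <= gamma' /\
     forall x, aff (comp_face K (c - A^T *m ys)) x ->
       dist x (primal_sol A b c K) <=
         gamma * enorm (A *m x - b) + gamma' * dist x (comp_face K (c - A^T *m ys)))
  /\
  ((exists x0, primal_sol A b c K = [set x0]) ->
     forall x, aff (comp_face K (c - A^T *m ys)) x ->
       dist x (primal_sol A b c K) <=
         (sigma_min A (aff (comp_face K (c - A^T *m ys))))^-1 * enorm (A *m x - b)).
Proof.
move=> K_proper [_ _ X_compact _] xs_sol [ys_feasible _] [xs_face [r [r_gt0 ball_sub_face]]].
have X_bounded := compact_bounded X_compact.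
have F0 : comp_face K (c - A^T *m ys) 0.
  by have [K_cone _ _ _ _] := K_proper; case: (comp_face_cone (c - A^T *m ys) K_cone).
have [k [W affF]] := aff_mxspan F0.
rewrite affF in ball_sub_face *; split.
  exact (mxspan_error_bound ys_feasible K_proper X_bounded xs_sol xs_face affF r_gt0 ball_sub_face).
move=> [x0 X1]; have {x0}X1 : primal_sol A b c K = [set xs].
  by move: xs_sol; rewrite X1 => ->.
exact (singleton_error_bound ys_feasible xs_sol xs_face affF r_gt0 ball_sub_face X1).
Qed.
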